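(* Let $\mathfrak{g}$ be a real Lie algebra with a complex structure $J$ and a $J$-compatible inner product $g$, and let $c\in\Lambda^3\mathfrak{g}^*$ be defined by $$c(X,Y,Z)=-g([JX,JY],Z)-g([JY,JZ],X)-g([JZ,JX],Y).$$ Let $\xi$ be the center of $\mathfrak{g}$ and $X\in\xi$. Then for every $Y\in\mathfrak{g}$, $$dc(X,Y,JX,JY)=2\Big(\|[Y,JX]\|^2-g([[JX,Y],JX],Y)-g([[Y,JY],JX],X)\Big).$$
   Context: A complex structure on $\mathfrak{g}$ is $J$ with $J^2=-\mathrm{Id}$ and $[X,Y]-[JX,JY]+J[JX,Y]+J[X,JY]=0$. $g$ is $J$-compatible if $g(JX,JY)=g(X,Y)$. The form $c$ is the torsion $3$-form of the Bismut connection of $(J,g)$. The differential $d$ is the Chevalley–Eilenberg differential: for $\alpha\in\Lambda^k\mathfrak{g}^*$, $d\alpha(X_0,\dots,X_k)=\sum_{i<j}(-1)^{i+j}\alpha([X_i,X_j],X_0,\dots,\hat X_i,\dots,\hat X_j,\dots,X_k)$. $\|\cdot\|$ is the norm induced by $g$. *)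

From mathcomp Require Import all_boot all_order all_algebra.
From mathcomp Require Import reals.
Set Implicit Arguments. Unset Strict Implicit. Unset Printing Implicit Defensive.
Import Order.TTheory GRing.Theory Num.Theory.
Local Open Scope ring_scope.

(* A (finite-dimensional) real Lie algebra is modelled as a vectType V over a
   realType R together with a bracket br : V -> V -> V. *)

Section Defs.
Variables (R : realType) (V : vectType R).

Definition is_lie_bracket (br : V -> V -> V) : Prop :=
  [/\ (forall (a : R) x y z, br (a *: x + y) z = a *: br x z + br y z),
      (forall (a : R) x y z, br x (a *: y + z) = a *: br x y + br x z),
      (forall x, br x x = 0) &
      (forall x y z, br x (br y z) + br y (br z x) + br z (br x y) = 0)].

Definition is_complex_structure (br : V -> V -> V) (J : V -> V) : Prop :=
  [/\ (forall (a : R) x y, J (a *: x + y) = a *: J x + J y),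
      (forall x, J (J x) = - x) &
      (forall x y, br x y - br (J x) (J y) + J (br (J x) y) + J (br x (J y)) = 0)].

Definition is_compatible_inner_product (J : V -> V) (g : V -> V -> R) : Prop :=
  [/\ (forall (a : R) x y z, g (a *: x + y) z = a * g x z + g y z),
      (forall x y, g x y = g y x),
      (forall x, x != 0 -> 0 < g x x) &
      (forall x y, g (J x) (J y) = g x y)].

Definition sqnorm (g : V -> V -> R) (x : V) : R := g x x.

Definition cform (br : V -> V -> V) (J : V -> V) (g : V -> V -> R)
  (x y z : V) : R :=
  - g (br (J x) (J y)) z - g (br (J y) (J z)) x - g (br (J z) (J x)) y.

(* Chevalley--Eilenberg differential of a 3-form alpha, evaluated on 4 vectors:
   d alpha(X0,X1,X2,X3) = sum_{i<j} (-1)^(i+j) alpha([Xi,Xj], X_k, X_l) (k<l the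
   remaining indices in increasing order). *)
Definition ce_d3 (br : V -> V -> V) (alpha : V -> V -> V -> R)
  (x0 x1 x2 x3 : V) : R :=
    - alpha (br x0 x1) x2 x3
    + alpha (br x0 x2) x1 x3
    - alpha (br x0 x3) x1 x2
    - alpha (br x1 x2) x0 x3
    + alpha (br x1 x3) x0 x2
    - alpha (br x2 x3) x0 x1.

Definition in_center (br : V -> V -> V) (x : V) : Prop :=
  forall y, br x y = 0.

End Defs.

From mathcomp Require Import all_boot all_order all_algebra.
From mathcomp Require Import reals.
From mathcomp Require Import ring.

Set Implicit Arguments.
Unset Strict Implicit.
Unset Printing Implicit Defensive.
Import Order.TTheory GRing.Theory Num.Theory.
Local Open Scope ring_scope.

(* For X central, integrability of J says exactly that ad_{JX} commutes with
   J, so J-compatibility of g identifies the terms of dc(X,Y,JX,JY) coming from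
   the J-rotated pairs with terms in X and Y themselves.  Only the three terms
   of dc in which X is not bracketed survive, and one Jacobi identity finishes
   the computation. *)

Section CenterTorsion.
Variables (R : realType) (V : vectType R).
Variables (br : V -> V -> V) (J : V -> V) (g : V -> V -> R).
Hypothesis Hbr : is_lie_bracket br.
Hypothesis HJ : is_complex_structure br J.
Hypothesis Hg : is_compatible_inner_product J g.

Lemma brDl u v w : br (u + v) w = br u w + br v w.
Proof. by case: Hbr => brl _ _ _; have := brl 1 u v w; rewrite !scale1r. Qed.

Lemma brDr u v w : br w (u + v) = br w u + br w v.
Proof. by case: Hbr => _ brr _ _; have := brr 1 w u v; rewrite !scale1r. Qed.

Lemma br0l w : br 0 w = 0.
Proof. by apply: (@addrI _ (br 0 w)); rewrite addr0 -brDl addr0. Qed.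

Lemma br0r w : br w 0 = 0.
Proof. by apply: (@addrI _ (br w 0)); rewrite addr0 -brDr addr0. Qed.

Lemma brNl u w : br (- u) w = - br u w.
Proof. by apply/eqP; rewrite -addr_eq0 -brDl addNr br0l. Qed.

Lemma brNr u w : br w (- u) = - br w u.
Proof. by apply/eqP; rewrite -addr_eq0 -brDr addNr br0r. Qed.

Lemma br_anti u v : br u v = - br v u.
Proof.
case: Hbr => _ _ brxx _; apply/eqP; rewrite -addr_eq0.
by have := brxx (u + v); rewrite brDl !brDr !brxx add0r addr0 => ->.
Qed.

Lemma br_center_r x z : in_center br x -> br z x = 0.
Proof. by move=> Hx; rewrite br_anti Hx oppr0. Qed.

Lemma br_jacobi_l a b c : br (br a b) c = br a (br b c) - br b (br a c).
Proof.
case: Hbr => _ _ _ jac.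
rewrite br_anti (br_anti a c) brNr opprK; apply: (@addrI _ (br c (br a b))).
by rewrite addrN addrA jac.
Qed.

Lemma JD u v : J (u + v) = J u + J v.
Proof. by case: HJ => Jl _ _; have := Jl 1 u v; rewrite !scale1r. Qed.

Lemma J0 : J 0 = 0.
Proof. by apply: (@addrI _ (J 0)); rewrite addr0 -JD addr0. Qed.

Lemma JN u : J (- u) = - J u.
Proof. by apply/eqP; rewrite -addr_eq0 -JD addNr J0. Qed.

Lemma gDl u v w : g (u + v) w = g u w + g v w.
Proof. by case: Hg => gl _ _ _; have := gl 1 u v w; rewrite scale1r mul1r. Qed.

Lemma g0l w : g 0 w = 0.
Proof. by apply: (@addrI _ (g 0 w)); rewrite addr0 -gDl addr0. Qed.

Lemma g0r w : g w 0 = 0.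
Proof. by case: Hg => _ gsym _ _; rewrite gsym g0l. Qed.

Lemma gNl u w : g (- u) w = - g u w.
Proof. by apply/eqP; rewrite -addr_eq0 -gDl addNr g0l. Qed.

Lemma gNr u w : g w (- u) = - g w u.
Proof. by case: Hg => _ gsym _ _; rewrite gsym gNl gsym. Qed.

Lemma cform0 u v : cform br J g 0 u v = 0.
Proof. by rewrite /cform J0 br0l br0r !g0l g0r !subr0 oppr0. Qed.

Lemma ce_d3_center (alpha : V -> V -> V -> R) x y z w :
  (forall u v, alpha 0 u v = 0) -> in_center br x ->
  ce_d3 br alpha x y z w =
  - alpha (br y z) x w + alpha (br y w) x z - alpha (br z w) x y.
Proof. by move=> alpha0 Hx; rewrite /ce_d3 !Hx !alpha0 oppr0 !add0r. Qed.

Lemma J_brl_center x z : in_center br x -> J (br (J x) z) = br (J x) (J z).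
Proof.
case: HJ => _ _ Jint Hx; apply/eqP; rewrite -subr_eq0 -[X in _ == X](Jint x z).
by rewrite !Hx J0 sub0r addr0 addrC.
Qed.

Lemma J_brr_center x z : in_center br x -> J (br z (J x)) = br (J z) (J x).
Proof.
by move=> Hx; rewrite br_anti JN J_brl_center // -br_anti.
Qed.

End CenterTorsion.

Theorem lemma3p4 (R : realType) (V : vectType R)
  (br : V -> V -> V) (J : V -> V) (g : V -> V -> R)
  (Hbr : is_lie_bracket br)
  (HJ : is_complex_structure br J)
  (Hg : is_compatible_inner_product J g)
  (x : V) (Hx : in_center br x) (y : V) :
  ce_d3 br (cform br J g) x y (J x) (J y) =
  2 * (sqnorm g (br y (J x)) - g (br (br (J x) y) (J x)) y
       - g (br (br y (J y)) (J x)) x).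
Proof.
have [_ JJ _] := HJ; have [_ _ _ gJ] := Hg.
have JxJz z : J (br (J x) z) = br (J x) (J z) := J_brl_center HJ z Hx.
have JzJx z : J (br z (J x)) = br (J z) (J x) := J_brr_center Hbr HJ z Hx.
have hnorm : g (br (J x) (J y)) (br (J x) (J y)) = g (br (J x) y) (br (J x) y).
  by rewrite -JxJz gJ.
have hcube : g (br (br (J x) (J y)) (J x)) (J y) = g (br (br (J x) y) (J x)) y.
  by rewrite -JxJz -JzJx gJ.
have hbrJyJy : g (br (J (br y (J y))) (J x)) (J x) = g (br (br y (J y)) (J x)) x.
  by rewrite -JzJx gJ.
rewrite (ce_d3_center _ _ _ (cform0 Hbr HJ Hg) Hx).
rewrite /cform /sqnorm (br_anti Hbr y (J x)) !(JN HJ) !JJ !JxJz !JJ.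
rewrite !(brNl Hbr) !(brNr Hbr) !(br_center_r Hbr _ Hx) ?oppr0.
rewrite !(gNl Hg) !(gNr Hg) !(g0l Hg).
rewrite Hx (brNl Hbr) (g0l Hg) (gNl Hg) hnorm hcube hbrJyJy.
rewrite (br_jacobi_l Hbr y (J y)) (gDl Hg) (gNl Hg).
rewrite (br_anti Hbr (J y) (J x)) (br_anti Hbr y (J x)) !(brNr Hbr) !(gNl Hg).
by ring.
Qed.
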